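(* Let $w=a_1\cdots a_n$ be a word over $\{a,b\}$ with $a_1=a_n$. If deleting some $k$ letters from $w$ yields a palindrome, then one can obtain a palindrome by deleting some $l\le k$ letters from $w$ in such a way that the letters $a_1$ and $a_n$ are not deleted.
   Context: A word is a finite word over the two-letter alphabet $\{a,b\}$. A word $w=a_1\cdots a_n$ is a palindrome if $a_i=a_{n-i+1}$ for all $i\le n$. *)

From HB Require Import structures.
From mathcomp Require Import all_boot.
Set Implicit Arguments. Unset Strict Implicit. Unset Printing Implicit Defensive.

Inductive letter := la | lb.

Definition letter_eqb (x y : letter) : bool :=
  match x, y with la, la | lb, lb => true | _, _ => false end.
Lemma letter_eqP : Equality.axiom letter_eqb.
Proof. by case; case; constructor. Qed.
HB.instance Definition _ := hasDecEq.Build letter letter_eqP.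

Definition word := seq letter.

Definition palindrome (w : word) : Prop :=
  forall i, i < size w -> nth la w i = nth la w (size w - i.+1).

(* A deletion pattern for w: a bit mask of the same length as w; bit i = false
   means the (i+1)-th letter is deleted. *)
Definition deletion (w : word) (m : bitseq) : Prop := size m = size w.
Definition ndeleted (m : bitseq) : nat := count_mem false m.

(* A palindromic subsequence p of c v c with at least two letters has the form
   x r x with r a palindromic subsequence of v; replacing the outer x's by the
   two c's gives the palindrome c r c, which keeps both ends of the word and is
   at least as long as p, so it deletes at most as many letters. *)

From mathcomp Require Import all_boot.

Set Implicit Arguments.
Unset Strict Implicit.
Unset Printing Implicit Defensive.

Lemma palindrome_revP (p : word) : palindrome p <-> rev p = p.
Proof.
split=> [pal_p | rev_p i lt_i].
- apply: (@eq_from_nth _ la); first by rewrite size_rev.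
  by move=> i; rewrite size_rev => lt_i; rewrite nth_rev // (pal_p i lt_i).
- by rewrite -[in LHS]rev_p nth_rev.
Qed.

Lemma ndeleted_mask (T : Type) (m : bitseq) (s : seq T) :
  size m = size s -> ndeleted m = size s - size (mask m s).
Proof.
move=> size_m; rewrite size_mask // -size_m -(count_predC id m) addKn.
by apply: eq_count; case.
Qed.

Lemma subseq_cons2 (T : eqType) (x y : T) (s t : seq T) :
  subseq (x :: s) (y :: t) -> subseq s t.
Proof.
rewrite /=; case: eqP => _ // sub_s; exact: cons_subseq sub_s.
Qed.

Lemma subseq_rcons2 (T : eqType) (x y : T) (s t : seq T) :
  subseq (rcons s x) (rcons t y) -> subseq s t.
Proof. by rewrite -subseq_rev -[subseq s t]subseq_rev !rev_rcons; exact: subseq_cons2. Qed.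

Lemma rev_subseq_bracket (T : eqType) (c : T) (v p : seq T) :
  subseq p (c :: rcons v c) -> rev p = p ->
  exists2 r : seq T, subseq r v & rev r = r /\ size p <= (size r).+2.
Proof.
case: p => [|x t]; first by exists [::]; rewrite ?sub0seq.
case/lastP: t => [|r y] sub_p rev_p; first by exists [::]; rewrite ?sub0seq.
exists r; first exact: subseq_rcons2 (subseq_cons2 sub_p).
split; last by rewrite /= size_rcons.
by move: rev_p; rewrite rev_cons rev_rcons => -[_ /rcons_inj[]].
Qed.

Theorem lemma2 (w : word) (k : nat) :
  0 < size w ->
  nth la w 0 = nth la w (size w).-1 ->
  (exists m : bitseq, deletion w m /\ ndeleted m = k /\ palindrome (mask m w)) ->
  exists (l : nat) (m' : bitseq),
    [/\ deletion w m', ndeleted m' = l, l <= k & palindrome (mask m' w)] /\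
    nth false m' 0 = true /\ nth false m' (size w).-1 = true.
Proof.
case: w => [|c t] // _; case/lastP: t => [|v d] => [_ _|].
  by exists 0, [:: true]; split => //; split => // -[|i].
rewrite /= size_rcons /= nth_rcons ltnn eqxx => <- [m [del_m [<- pal_m]]].
have [r /subseqP[mr size_mr ->] [rev_r size_p]] :=
  rev_subseq_bracket (mask_subseq m _) (proj1 (palindrome_revP _) pal_m).
exists (ndeleted mr), (true :: rcons mr true); split; last first.
  by rewrite /= nth_rcons size_mr ltnn eqxx.
have size_w : size (c :: rcons v c) = (size v).+2 by rewrite /= size_rcons.
split => //.
- by rewrite /deletion /= !size_rcons size_mr.
- by rewrite /ndeleted /= -cats1 count_cat /= !addn0.
- rewrite (ndeleted_mask del_m) (ndeleted_mask size_mr) size_w -2!subSS.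
  exact: leq_sub2l.
- apply/palindrome_revP.
  by rewrite /= mask_rcons // cats1 rev_cons rev_rcons rev_r.
Qed.
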